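(* Let $n\ge 1$ and let $M=\Gamma(H\,\overrightarrow{\times}\,G,(u,0))$, where $(H,u)$ is a linearly ordered group with strong unit $u$ and $G$ is a Dedekind $\sigma$-complete $\ell$-group. Let $x:\mathcal B(\mathbb R^n)\to M$ be an $n$-dimensional observable and define $F:\mathbb R^n\to M$ by $$F(t_1,\ldots,t_n)=x\big((-\infty,t_1)\times\cdots\times(-\infty,t_n)\big).$$ Then: (1) $F(s_1,\ldots,s_n)\le F(t_1,\ldots,t_n)$ whenever $s_i\le t_i$ for all $i$; (2) $\bigvee_{(s_1,\ldots,s_n)\in\mathbb R^n}F(s_1,\ldots,s_n)$ exists in $M$ and equals $1=(u,0)$; (3) for every $(t_1,\ldots,t_n)\in\mathbb R^n$, $\bigvee_{(s_1,\ldots,s_n)\ll(t_1,\ldots,t_n)}F(s_1,\ldots,s_n)$ exists and equals $F(t_1,\ldots,t_n)$; (4) for every $i\in\{1,\ldots,n\}$ and all $s_1,\ldots,s_n\in\mathbb R$, $\bigwedge_{t_i\in\mathbb R}F(s_1,\ldots,s_{i-1},t_i,s_{i+1},\ldots,s_n)$ exists and equals $0$; (5) (volume condition) for all reals $a_i\le b_i$, $i=1,\ldots,n$, $$1\ge \Delta_1(a_1,b_1)\big(\cdots\big(\Delta_n(a_n,b_n)F(s_1,\ldots,s_n)\big)\cdots\big)\ge 0,$$ where for a map $K:\mathbb R^n\to H\,\overrightarrow{\times}\,G$, $\Delta_i(a_i,b_i)K(s_1,\ldots,s_n)=K(s_1,\ldots,s_{i-1},b_i,s_{i+1},\ldots,s_n)-K(s_1,\ldots,s_{i-1},a_i,s_{i+1},\ldots,s_n)$,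 the subtraction being computed in the group $H\,\overrightarrow{\times}\,G$.
   Context: For po-groups $H,G$, $H\,\overrightarrow{\times}\,G$ is the group $H\times G$ with the lexicographic order: $(h_1,g_1)\le(h_2,g_2)$ iff $h_1<h_2$, or $h_1=h_2$ and $g_1\le g_2$. For a unital $\ell$-group $(K,v)$, $\Gamma(K,v)$ is the MV-algebra $([0,v];\oplus,',0,v)$ with $a\oplus b=(a+b)\wedge v$, $a'=v-a$. A $\ell$-group $G$ is Dedekind $\sigma$-complete if every countable subset bounded above has a supremum. On $M$ a partial addition is defined: $a+b$ is defined iff $a\le b'$ and then $a+b$ is the group sum. A sequence $(a_m)_m$ in $M$ is summable if every finite subfamily has a (finite, iterated) sum in $M$; its sum $\sum_m a_m$ is the supremum in $M$ of all finite partial sums, if it exists. An $n$-dimensional observable is a map $x:\mathcal B(\mathbb R^n)\to M$ (Borel sets) with $x(\mathbb R^n)=1$ such that for every sequence $(A_m)_m$ of pairwise disjoint Borel sets, $(x(A_m))_m$ is summable and $x(\bigcup_m A_m)=\sum_m x(A_m)$. For $\mathbf s,\mathbf t\in\mathbb R^n$, $\mathbf s\ll\mathbf t$ means $s_i<t_i$ for all $i$. *)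

From mathcomp Require Import all_boot all_order all_algebra.
From mathcomp Require Import all_classical all_reals all_analysis.
Set Implicit Arguments.
Unset Strict Implicit.
Unset Printing Implicit Defensive.
Import GRing.Theory Num.Theory numFieldNormedType.Exports.
Local Open Scope classical_set_scope.
Local Open Scope ring_scope.

Definition is_sup_in (T : Type) (le : T -> T -> Prop) (P S : set T) (s : T) :=
  [/\ P s, (forall y, S y -> le y s) &
      (forall b, P b -> (forall y, S y -> le y b) -> le s b)].

Definition is_inf_in (T : Type) (le : T -> T -> Prop) (P S : set T) (s : T) :=
  [/\ P s, (forall y, S y -> le s y) &
      (forall b, P b -> (forall y, S y -> le b y) -> le b s)].

Definition pogroup (G : zmodType) (le : G -> G -> Prop) : Prop :=
  [/\ (forall a, le a a),
      (forall a b, le a b -> le b a -> a = b),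
      (forall a b c, le a b -> le b c -> le a c) &
      (forall a b c, le a b -> le (a + c) (b + c))].

Definition lgroup (G : zmodType) (le : G -> G -> Prop) : Prop :=
  pogroup le /\
  forall a b : G, (exists s, is_sup_in le setT [set a; b] s) /\
                  (exists i, is_inf_in le setT [set a; b] i).

Definition linear_group (G : zmodType) (le : G -> G -> Prop) : Prop :=
  pogroup le /\ forall a b : G, le a b \/ le b a.

Definition strong_unit (G : zmodType) (le : G -> G -> Prop) (u : G) : Prop :=
  le 0 u /\ forall g : G, exists k : nat, le g (u *+ k).

(* Dedekind sigma-complete: every (nonempty) countable subset bounded above
   has a supremum; countable nonempty subsets = ranges of sequences. *)
Definition dedekind_sigma_complete (G : zmodType) (le : G -> G -> Prop) : Prop :=
  forall f : nat -> G, (exists b, forall k, le (f k) b) ->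
    exists s, is_sup_in le setT (range f) s.

Definition lexle (H G : zmodType) (leH : H -> H -> Prop) (leG : G -> G -> Prop)
  (p q : H * G) : Prop :=
  (p.1 <> q.1 /\ leH p.1 q.1) \/ (p.1 = q.1 /\ leG p.2 q.2).

Definition Gamma_set (K : zmodType) (le : K -> K -> Prop) (v : K) : set K :=
  [set a | le 0 a /\ le a v].

(* iterated partial sum a_{i1} + (a_{i2} + (... + 0)) in Gamma(K,v), where
   a + b is defined iff a <= b' = v - b. [isum_eq le v a s b] means the
   iterated sum over the index list s is defined and equals b. *)
Fixpoint isum_eq (K : zmodType) (le : K -> K -> Prop) (v : K) (a : nat -> K)
  (s : seq nat) (b : K) : Prop :=
  match s with
  | [::] => b = 0
  | i :: s' => exists c, isum_eq le v a s' c /\ le (a i) (v - c) /\ b = a i + c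
  end.

Definition summable (K : zmodType) (le : K -> K -> Prop) (v : K) (a : nat -> K) :=
  forall s : seq nat, uniq s -> exists b, isum_eq le v a s b.

Definition is_sum (K : zmodType) (le : K -> K -> Prop) (v : K) (a : nat -> K)
  (sigma : K) :=
  is_sup_in le (Gamma_set le v)
    [set b | exists s : seq nat, uniq s /\ isum_eq le v a s b] sigma.

Definition borel (R : realType) (n : nat) : set (set 'rV[R]_n) :=
  <<s [set A : set 'rV[R]_n | open A] >>.

Definition observable (R : realType) (n : nat) (K : zmodType)
  (le : K -> K -> Prop) (v : K) (x : set 'rV[R]_n -> K) : Prop :=
  [/\ (forall A, borel A -> Gamma_set le v (x A)),
      x setT = v &
      (forall A : nat -> set 'rV[R]_n,
        (forall m, borel (A m)) ->
        (forall i j, i <> j -> A i `&` A j = set0) ->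
        summable le v (fun m => x (A m)) /\
        is_sum le v (fun m => x (A m)) (x (\bigcup_m A m)))].

Definition lbox (R : realType) (n : nat) (t : 'rV[R]_n) : set 'rV[R]_n :=
  [set s | forall i : 'I_n, s ord0 i < t ord0 i].

Definition sll (R : realType) (n : nat) (s t : 'rV[R]_n) : Prop :=
  forall i : 'I_n, s ord0 i < t ord0 i.

Definition upd (R : realType) (n : nat) (s : 'rV[R]_n) (i : 'I_n) (r : R)
  : 'rV[R]_n := \row_j (if j == i then r else s ord0 j).

Definition Delta (R : realType) (n : nat) (K : zmodType) (i : 'I_n) (a b : R)
  (F : 'rV[R]_n -> K) : 'rV[R]_n -> K :=
  fun s => F (upd s i b) - F (upd s i a).

Definition volume (R : realType) (n : nat) (K : zmodType) (a b : 'rV[R]_n)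
  (F : 'rV[R]_n -> K) : 'rV[R]_n -> K :=
  foldr (fun i G => Delta i (a ord0 i) (b ord0 i) G) F (enum 'I_n).

(* An observable is a measure with values in the interval [0, v] of a
   partially ordered group: it is finitely additive, hence monotone with
   x (B `\` A) = x B - x A, and sigma-additivity makes x of an increasing union
   the least upper bound of the values on its members (continuity from above
   follows by taking differences inside the first member).  Then (1) is
   monotonicity; (2) and (3) exhaust R^n, resp. the open orthant below t, by the
   orthants below (k, ..., k), resp. t - (1/(k+1), ..., 1/(k+1)); (4) uses the
   orthants whose i-th bound is -k, which decrease to the empty set; and in (5)
   the iterated difference telescopes to x of the box [a_1, b_1) x ... x
   [a_n, b_n), which lies in [0, v]. *)

From Pilot Require Import Defs.
From mathcomp Require Import all_boot all_order all_algebra.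
From mathcomp Require Import all_classical all_reals all_analysis.
Import Order.TTheory GRing.Theory Num.Theory numFieldNormedType.Exports.
Local Open Scope classical_set_scope.
Local Open Scope ring_scope.

Set Implicit Arguments.
Unset Strict Implicit.
Unset Printing Implicit Defensive.

Section POGroup.
Variables (K : zmodType) (le : K -> K -> Prop).
Hypothesis hle : pogroup le.

Lemma po_lexx a : le a a. Proof. by case: hle. Qed.

Lemma po_anti a b : le a b -> le b a -> a = b.
Proof. by case: hle => _ anti _ _; exact: anti. Qed.

Lemma po_trans a b c : le a b -> le b c -> le a c.
Proof. by case: hle => _ _ tr _; exact: tr. Qed.

Lemma po_lerD2r c a b : le a b -> le (a + c) (b + c).
Proof. by case: hle => _ _ _ mon; exact: mon. Qed.

Lemma po_lerD2l c a b : le a b -> le (c + a) (c + b).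
Proof. by rewrite ![c + _]addrC; exact: po_lerD2r. Qed.

Lemma po_lerD a b c d : le a b -> le c d -> le (a + c) (b + d).
Proof. by move=> /(po_lerD2r c) ab /(po_lerD2l b); exact: po_trans. Qed.

Lemma po_addr_ge0 a b : le 0 a -> le 0 b -> le 0 (a + b).
Proof. by move=> a0 b0; rewrite -(addr0 0); exact: po_lerD. Qed.

Lemma po_subr_ge0 a b : le 0 (b - a) <-> le a b.
Proof.
split=> [/(po_lerD2r a)|/(po_lerD2r (- a))]; first by rewrite add0r subrK.
by rewrite subrr.
Qed.

Lemma po_lerN2 a b : le a b -> le (- b) (- a).
Proof. by move=> /(po_lerD2r (- a - b)); rewrite addrA subrr add0r addrCA subrr addr0. Qed.

Lemma po_lerB2l c a b : le (c - a) (c - b) <-> le b a.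
Proof.
split=> [/po_lerN2|/po_lerN2/(po_lerD2l c)] //.
by rewrite !opprB => /(po_lerD2r c); rewrite !subrK.
Qed.

Lemma po_sumr_ge0 (I : Type) (r : seq I) (P : pred I) (a : I -> K) :
  (forall i, P i -> le 0 (a i)) -> le 0 (\sum_(i <- r | P i) a i).
Proof. by move=> a_ge0; elim/big_ind: _ => //; [exact: po_lexx|exact: po_addr_ge0]. Qed.

Lemma po_ler_sum_uniq (I : eqType) (r s : seq I) (a : I -> K) :
  uniq r -> uniq s -> (forall i, i \in r -> i \notin s -> a i = 0) ->
  (forall i, i \in s -> le 0 (a i)) ->
  le (\sum_(i <- r) a i) (\sum_(i <- s) a i).
Proof.
move=> r_uniq s_uniq a0 a_ge0.
have -> : \sum_(i <- r) a i = \sum_(i <- r | i \in s) a i.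
  rewrite [RHS]big_mkcond /= !big_seq; apply: eq_bigr => i ir.
  by case: ifP => // /negbT /(a0 _ ir).
have -> : \sum_(i <- r | i \in s) a i = \sum_(i <- s | i \in r) a i.
  rewrite -big_filter -[RHS]big_filter; apply/perm_big/uniq_perm; rewrite ?filter_uniq //.
  by move=> i; rewrite !mem_filter andbC.
rewrite [X in le _ X](bigID (mem r)) /= -[X in le X _]addr0.
apply: po_lerD; first exact: po_lexx.
by rewrite big_seq_cond; apply: po_sumr_ge0 => i /andP[+ _]; exact: a_ge0.
Qed.

End POGroup.

Section PartialSums.
Variables (K : zmodType) (le : K -> K -> Prop) (v : K) (a : nat -> K).

Lemma isum_eqE s b : isum_eq le v a s b -> b = \sum_(i <- s) a i.
Proof.
elim: s b => [|i s IH] b /=; first by rewrite big_nil.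
by case=> c [/IH -> [_ ->]]; rewrite big_cons.
Qed.

Hypotheses (hle : pogroup le) (a_Gamma : forall i, Gamma_set le v (a i)).

Lemma isum_eq_Gamma s b : le 0 v -> isum_eq le v a s b -> Gamma_set le v b.
Proof.
move=> v_ge0; elim: s b => [|i s IH] b /=; first by move=> ->; split; [exact: (po_lexx hle 0)|].
case=> c [/IH [c_ge0 _] [ai_le ->]]; split.
  by apply: (po_addr_ge0 hle) => //; case: (a_Gamma i).
by move: ai_le => /(po_lerD2r hle c); rewrite subrK.
Qed.

End PartialSums.

Section Borel.
Variables (R : realType) (n : nat).
Local Notation borelType := (g_sigma_algebraType [set A : set 'rV[R]_n | open A]).
Implicit Types A B : set 'rV[R]_n.

Lemma borel0 : borel (set0 : set 'rV[R]_n). Proof. exact: (@measurable0 _ borelType). Qed.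

Lemma borelT : borel (setT : set 'rV[R]_n). Proof. exact: (@measurableT _ borelType). Qed.

Lemma borelD A B : borel A -> borel B -> borel (A `\` B).
Proof. exact: (@measurableD _ borelType). Qed.

Lemma borel_bigcap (A : nat -> set 'rV[R]_n) :
  (forall k, borel (A k)) -> borel (\bigcap_k A k).
Proof. exact: (@bigcapT_measurable _ borelType). Qed.

Lemma borel_forall (Q : 'I_n -> set 'rV[R]_n) :
  (forall j, borel (Q j)) -> borel [set y | forall j, Q j y].
Proof.
move=> Q_borel; have -> : [set y | forall j, Q j y] = \bigcap_(j in [set: 'I_n]) Q j.
  by apply/seteqP; split=> y /= Qy j //; exact: Qy.
by apply: (@fin_bigcap_measurable _ borelType) => [|j _]; [exact: finite_finset|exact: Q_borel].
Qed.

Lemma borel_coord_lt (j : 'I_n) (c : R) : borel [set y : 'rV[R]_n | y ord0 j < c].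
Proof.
apply: sub_sigma_algebra.
change (open ((fun y : 'rV[R]_n => y ord0 j) @^-1` [set r | r < c])).
by apply: open_comp; [move=> y _; exact: coord_continuous|exact: open_lt].
Qed.

Lemma borel_coord_itv (j : 'I_n) (c d : R) :
  borel [set y : 'rV[R]_n | c <= y ord0 j < d].
Proof.
have -> : [set y : 'rV[R]_n | c <= y ord0 j < d] =
          [set y | y ord0 j < d] `\` [set y | y ord0 j < c].
  apply/seteqP; split=> y /=; first by move=> /andP[cy ->]; rewrite ltNge cy.
  by move=> [-> /negP]; rewrite -leNgt => ->.
by apply: borelD; exact: borel_coord_lt.
Qed.

Lemma borel_lbox (t : 'rV[R]_n) : borel (lbox t).
Proof. by apply: borel_forall => j; exact: borel_coord_lt. Qed.

End Borel.

Section Observable.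
Variables (R : realType) (n : nat) (K : zmodType) (le : K -> K -> Prop) (v : K).
Variable x : set 'rV[R]_n -> K.
Hypotheses (hle : pogroup le) (hx : observable le v x).
Implicit Types A B : set 'rV[R]_n.

Lemma observable_Gamma A : borel A -> Gamma_set le v (x A).
Proof. by case: hx => Gx _ _; exact: Gx. Qed.

Lemma observable_ge0 A : borel A -> le 0 (x A).
Proof. by move=> /observable_Gamma[]. Qed.

Lemma unit_ge0 : le 0 v.
Proof. by case: hx => _ xT _; rewrite -xT; exact: observable_ge0 (@borelT R n). Qed.

(* Qualified: MathComp-Analysis has its own [summable]. *)
Lemma observable_is_sum (A : nat -> set 'rV[R]_n) :
  (forall k, borel (A k)) -> (forall i j, i <> j -> A i `&` A j = set0) ->
  Defs.summable le v (fun k => x (A k)) /\ is_sum le v (fun k => x (A k)) (x (\bigcup_k A k)).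
Proof. by case: hx => _ _; exact. Qed.

Lemma observable0 : x set0 = 0.
Proof.
have [summ [_ ub _]] :=
  observable_is_sum (fun _ => @borel0 R n) (fun _ _ _ => setI0 set0).
rewrite bigcup0 // in ub.
have [b b_sum] := summ [:: 0; 1]%N erefl.
have /ub : exists s, uniq s /\ isum_eq le v (fun=> x set0) s b by exists [:: 0; 1]%N.
rewrite (isum_eqE b_sum) !big_cons big_nil addr0 => /(po_lerD2r hle (- x set0)).
rewrite addrK subrr => x0_le0.
exact: (po_anti hle x0_le0 (observable_ge0 (@borel0 R n))).
Qed.

Lemma observable_bigcup_finite (A : nat -> set 'rV[R]_n) (N : nat) :
  (forall k, borel (A k)) -> (forall i j, i <> j -> A i `&` A j = set0) ->
  (forall k, (N <= k)%N -> A k = set0) ->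
  x (\bigcup_k A k) = \sum_(k <- iota 0 N) x (A k).
Proof.
move=> A_borel A_disj A0.
have [summ [_ ub least]] := observable_is_sum A_borel A_disj.
have [c c_sum] := summ (iota 0 N) (iota_uniq 0 N).
rewrite -(isum_eqE c_sum); apply: (po_anti hle).
  apply: least.
    exact: (isum_eq_Gamma hle (fun k => observable_Gamma (A_borel k)) unit_ge0 c_sum).
  move=> _ [s [s_uniq /isum_eqE ->]]; rewrite (isum_eqE c_sum).
  apply: (po_ler_sum_uniq hle) => //; first exact: iota_uniq.
    by move=> k _; rewrite mem_iota /= -leqNgt => /A0 ->; exact: observable0.
  by move=> k _; exact: observable_ge0.
by apply: ub; exists (iota 0 N); split=> //; exact: iota_uniq.
Qed.

Lemma observable_setU A B : borel A -> borel B -> A `&` B = set0 ->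
  x (A `|` B) = x A + x B.
Proof.
move=> A_borel B_borel AB0; rewrite -bigcup2E (@observable_bigcup_finite _ 2).
- by rewrite /= !big_cons big_nil addr0.
- by move=> [|[|k]] //=; exact: borel0.
- by move=> [|[|i]] [|[|j]] ij //=; rewrite ?setI0 ?set0I ?(setIC B).
- by move=> [|[|k]].
Qed.

Lemma observableD A B : borel A -> borel B -> A `<=` B -> x (B `\` A) = x B - x A.
Proof.
move=> A_borel B_borel AB.
rewrite -[in x B](setDUK AB) observable_setU ?setDIK //; last exact: borelD.
by rewrite addrAC subrr add0r.
Qed.

Lemma observable_le A B : borel A -> borel B -> A `<=` B -> le (x A) (x B).
Proof.
move=> A_borel B_borel AB; apply/(po_subr_ge0 hle).
by rewrite -observableD //; exact: (observable_ge0 (borelD B_borel A_borel)).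
Qed.

Lemma observable_bigcup_le (C : nat -> set 'rV[R]_n) b :
  (forall k, borel (C k)) -> (forall k, C k `<=` C k.+1) ->
  Gamma_set le v b -> (forall k, le (x (C k)) b) -> le (x (\bigcup_k C k)) b.
Proof.
move=> C_borel C_nd b_Gamma C_le_b.
have C_ndseq : nondecreasing_seq C by apply/nondecreasing_seqP => k; exact/subsetPset.
have D_borel k : borel (seqD C k) by case: k => [|k] /=; [|apply: borelD].
have D_disj i j : i <> j -> seqD C i `&` seqD C j = set0.
  move=> ij; apply/seteqP; split=> // y Dy; apply: ij.
  by apply: (trivIset_seqD C_ndseq I I); exists y.
have C_sum N : x (C N) = \sum_(0 <= k < N.+1) x (seqD C k).
  elim: N => [|N IH]; first by rewrite big_nat1.
  by rewrite big_nat_recr //= -IH observableD // addrC subrK.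
have [_ [_ _ least]] := observable_is_sum D_borel D_disj.
rewrite -eq_bigcup_seqD; apply: least => // _ [s [s_uniq /isum_eqE ->]].
apply: (po_trans hle _ (C_le_b (\max_(i <- s) i))); rewrite C_sum.
apply: (po_ler_sum_uniq hle) => //; first exact: iota_uniq.
  by move=> i i_s; rewrite mem_iota ltnS leq_bigmax_seq.
by move=> k _; exact: observable_ge0.
Qed.

Lemma observable_bigcap_ge (C : nat -> set 'rV[R]_n) c :
  (forall k, borel (C k)) -> (forall k, C k.+1 `<=` C k) ->
  Gamma_set le v c -> (forall k, le c (x (C k))) -> le c (x (\bigcap_k C k)).
Proof.
move=> C_borel C_ni [c_ge0 _] c_le_C.
have C_sub0 k : C k `<=` C 0 by elim: k => // k IH; exact: subset_trans (C_ni k) IH.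
have cap_borel : borel (\bigcap_k C k) by exact: borel_bigcap.
have cap_sub0 : \bigcap_k C k `<=` C 0 by move=> y; apply.
have D_cup : C 0 `\` \bigcap_k C k = \bigcup_k (C 0 `\` C k).
  by rewrite setDE setC_bigcap setI_bigcupr.
have : le (x (C 0 `\` \bigcap_k C k)) (x (C 0) - c).
  rewrite D_cup; apply: observable_bigcup_le.
  - by move=> k; exact: borelD.
  - by move=> k y [C0y nCky]; split=> // /C_ni.
  - split; first exact/(po_subr_ge0 hle).
    apply: (po_trans hle _ (proj2 (observable_Gamma (C_borel 0)))).
    by rewrite -[X in le _ X]subr0; apply/(po_lerB2l hle).
  - by move=> k; rewrite (observableD (C_borel k) (C_borel 0) (C_sub0 k)); exact/(po_lerB2l hle).
by rewrite observableD // => /(po_lerB2l hle).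
Qed.

End Observable.

Lemma lexle_pogroup (H G : zmodType) (leH : H -> H -> Prop) (leG : G -> G -> Prop) :
  pogroup leH -> pogroup leG -> pogroup (lexle leH leG).
Proof.
move=> [reflH antiH transH monH] [reflG antiG transG monG]; split.
- by move=> p; right.
- move=> [p1 p2] [q1 q2] [[/= pq pq_le]|[/= -> pq_le]] [[/= qp qp_le]|[/= qp qp_le]].
  + by case: pq; exact: antiH.
  + by case: pq.
  + by case: qp.
  + by rewrite (antiG _ _ pq_le qp_le).
- move=> [p1 p2] [q1 q2] [r1 r2] [[/= pq pq_le]|[/= -> pq_le]] [[/= qr qr_le]|[/= <- qr_le]] /=.
  + left; split; last exact: transH pq_le qr_le.
    by move=> /= pr; apply: pq; apply: antiH => //; rewrite pr.
  + by left.
  + by left.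
  + by right; split; last exact: transG pq_le qr_le.
- move=> [p1 p2] [q1 q2] [c1 c2] [[/= pq pq_le]|[/= -> pq_le]] /=.
  + by left; split; [move=> /addIr|exact: monH].
  + by right; split; last exact: monG.
Qed.

Lemma exists_natr_gt_fin (R : archiRealDomainType) (I : finType) (r : I -> R) :
  exists k : nat, forall i, r i < k%:R.
Proof.
exists (Num.truncn (\sum_i `|r i|)).+1 => i.
apply: le_lt_trans (truncnS_gt _); apply: le_trans (ler_norm _) _.
by rewrite (bigD1 i) //= lerDl; apply: sumr_ge0 => j _.
Qed.

Section Boxes.
Variables (R : realType) (n : nat).
Implicit Types (a b s t : 'rV[R]_n) (l : seq 'I_n).

Lemma updE s i r j : upd s i r ord0 j = if j == i then r else s ord0 j.
Proof. by rewrite mxE. Qed.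

Lemma lbox_subset s t : (forall i, s ord0 i <= t ord0 i) -> lbox s `<=` lbox t.
Proof. by move=> st y ys i; exact: lt_le_trans (ys i) (st i). Qed.

Definition partial_box a b s l : set 'rV[R]_n :=
  [set y | forall j, if j \in l then a ord0 j <= y ord0 j < b ord0 j
                     else y ord0 j < s ord0 j].

Lemma borel_partial_box a b s l : borel (partial_box a b s l).
Proof.
by apply: borel_forall => j; case: (j \in l); [exact: borel_coord_itv|exact: borel_coord_lt].
Qed.

Lemma partial_box_subset a b s t l : (forall i, s ord0 i <= t ord0 i) ->
  partial_box a b s l `<=` partial_box a b t l.
Proof.
by move=> st y ys j; have := ys j; case: (j \in l) => // /lt_le_trans; apply.
Qed.

Lemma partial_box_cons a b s i l : i \notin l ->
  partial_box a b s (i :: l) =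
  partial_box a b (upd s i (b ord0 i)) l `\` partial_box a b (upd s i (a ord0 i)) l.
Proof.
move=> il; apply/seteqP; split=> y.
  move=> ys; split=> [j|yA].
    by have := ys j; rewrite inE updE; case: eqP => [->|] //=; rewrite (negbTE il) => /andP[].
  have := yA i; have := ys i; rewrite inE eqxx (negbTE il) updE eqxx.
  by move=> /andP[ay _]; rewrite ltNge ay.
move=> [yB yA] j; rewrite inE; case: (eqVneq j i) => [->|ji] /=; last first.
  by have := yB j; case: (j \in l) => //; rewrite updE (negbTE ji).
have := yB i; rewrite (negbTE il) updE eqxx => -> ; rewrite andbT leNgt.
apply/negP => yia; apply: yA => k; have := yB k; case: (k \in l) => //.
by rewrite !updE; case: eqP => [->|].
Qed.

End Boxes.

Section Distribution.
Variables (R : realType) (n : nat) (K : zmodType) (le : K -> K -> Prop) (v : K).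
Variable x : set 'rV[R]_n -> K.
Hypotheses (hle : pogroup le) (hx : observable le v x).
Local Notation M := (Gamma_set le v).
Implicit Types (a b s t : 'rV[R]_n).
Local Notation F := (fun t => x (lbox t)).

Lemma distribution_le s t : (forall i, s ord0 i <= t ord0 i) -> le (F s) (F t).
Proof.
by move=> st; apply: (observable_le hle hx); [exact: borel_lbox|exact: borel_lbox|exact: lbox_subset].
Qed.

Lemma is_sup_distribution_exhaust (S T : set 'rV[R]_n) (t_ : nat -> 'rV[R]_n) :
  borel T -> (forall s, S s -> lbox s `<=` T) -> (forall k, S (t_ k)) ->
  (forall k i, t_ k ord0 i <= t_ k.+1 ord0 i) -> \bigcup_k lbox (t_ k) = T ->
  is_sup_in le M [set F s | s in S] (x T).
Proof.
move=> T_borel ST St t_nd cupT; split; first exact: (observable_Gamma hx T_borel).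
  by move=> _ [s Ss <-]; apply: (observable_le hle hx) => //; [exact: borel_lbox|exact: ST].
move=> c c_Gamma c_ub; rewrite -cupT; apply: (observable_bigcup_le hle hx) => // k.
- exact: borel_lbox.
- exact: lbox_subset.
- by apply: c_ub; exists (t_ k).
Qed.

Lemma distribution_sup_unit : is_sup_in le M (range F) v.
Proof.
have [_ xT _] := hx; rewrite -[X in is_sup_in _ _ _ X]xT.
apply: (is_sup_distribution_exhaust (t_ := fun k => const_mx k%:R)) => //.
- exact: (@borelT R n).
- by move=> k i; rewrite !mxE ler_nat.
- apply/seteqP; split=> // y _; have [k yk] := exists_natr_gt_fin (fun i => y ord0 i).
  by exists k => // i; rewrite mxE.
Qed.

Lemma distribution_sup_left t :
  is_sup_in le M [set F s | s in [set s | sll s t]] (F t).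
Proof.
have inv_gt0 k : 0 < k.+1%:R^-1 :> R by rewrite invr_gt0 ltr0Sn.
apply: (is_sup_distribution_exhaust (t_ := fun k => t - const_mx k.+1%:R^-1)).
- exact: borel_lbox.
- by move=> s st; apply: lbox_subset => i; exact: ltW (st i).
- by move=> k i; rewrite !mxE ltrBlDr ltrDl.
- by move=> k i; rewrite !mxE lerD2l lerN2 lef_pV2 ?posrE ?ltr0Sn // ler_nat.
apply/seteqP; split=> y.
  by move=> [k _ yk] i; apply: lt_trans (yk i) _; rewrite !mxE ltrBlDr ltrDl.
move=> yt; have [k yk] := exists_natr_gt_fin (fun i => (t ord0 i - y ord0 i)^-1).
exists k => // i; rewrite !mxE ltrBrDl -ltrBrDr.
rewrite invf_plt ?posrE ?subr_gt0 ?ltr0Sn ?yt //.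
by apply: lt_le_trans (yk i) _; rewrite ler_nat.
Qed.

Lemma distribution_inf0 i s : is_inf_in le M [set F (upd s i r) | r in [set: R]] 0.
Proof.
split; first by split; [exact: (po_lexx hle 0)|exact: unit_ge0 hx].
  by move=> _ [r _ <-]; exact: (observable_ge0 hx (borel_lbox _)).
move=> c c_Gamma c_lb; rewrite -(observable0 hle hx).
have -> : set0 = \bigcap_k lbox (upd s i (- k%:R)).
  apply/seteqP; split=> // y cap_y; have [k yk] := exists_natr_gt_fin (fun j => - y ord0 j).
  by have := cap_y k I i; rewrite updE eqxx ltrNr ltNge (ltW (yk i)).
apply: (observable_bigcap_ge hle hx) => // k.
- exact: borel_lbox.
- by apply: lbox_subset => j; rewrite !updE; case: eqP; rewrite // lerN2 ler_nat.
- by apply: c_lb; exists (- k%:R).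
Qed.

Lemma iterated_Delta_lbox a b : (forall i, a ord0 i <= b ord0 i) ->
  forall l, uniq l -> forall s,
  foldr (fun i G => Delta i (a ord0 i) (b ord0 i) G) F l s = x (partial_box a b s l).
Proof.
move=> ab; elim=> [|i l IH] /=; first by move=> _ s.
move=> /andP[il l_uniq] s; rewrite /Delta !IH // partial_box_cons // (observableD hle hx) //.
- exact: borel_partial_box.
- exact: borel_partial_box.
- by apply: partial_box_subset => j; rewrite !updE; case: eqP.
Qed.

End Distribution.

Theorem lemma3p2 (R : realType) (n : nat) (hn : (0 < n)%N)
  (H : zmodType) (leH : H -> H -> Prop) (u : H)
  (G : zmodType) (leG : G -> G -> Prop)
  (hH : linear_group leH) (hu : strong_unit leH u)
  (hG : lgroup leG) (hGs : dedekind_sigma_complete leG)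
  (x : set 'rV[R]_n -> (H * G)%type)
  (hx : observable (lexle leH leG) (u, 0) x) :
  let le := lexle leH leG in
  let v : (H * G)%type := (u, 0) in
  let M := Gamma_set le v in
  let F := fun t : 'rV[R]_n => x (lbox t) in
  [/\ (forall s t : 'rV[R]_n, (forall i, s ord0 i <= t ord0 i) -> le (F s) (F t)),
      is_sup_in le M (range F) v,
      (forall t : 'rV[R]_n, is_sup_in le M [set F s | s in [set s' : 'rV[R]_n | sll s' t]] (F t)),
      (forall (i : 'I_n) (s : 'rV[R]_n),
         is_inf_in le M [set F (upd s i r) | r in [set: R]] 0) &
      (forall a b : 'rV[R]_n, (forall i, a ord0 i <= b ord0 i) ->
         forall s : 'rV[R]_n,
           le (volume a b F s) v /\ le 0 (volume a b F s))].
Proof.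
move=> le v M F.
have hle : pogroup le := lexle_pogroup hH.1 hG.1.
split.
- exact: distribution_le hle hx.
- exact: distribution_sup_unit hle hx.
- exact: distribution_sup_left hle hx.
- exact: distribution_inf0 hle hx.
- move=> a b ab s; rewrite /volume (iterated_Delta_lbox hle hx ab (enum_uniq _)).
  by have [] := observable_Gamma hx (borel_partial_box a b s (enum 'I_n)).
Qed.
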